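(* Let $p,k$ be integers with $k\ge 2$ and $p\ge 2k$, and let $G=J(p,k)$ be the Johnson graph, with $n$ vertices and $m$ edges. Let $\mu_1\ge\cdots\ge\mu_n$ be the eigenvalues of the adjacency matrix of $G$, let $n^+$ be the number of positive eigenvalues, let $\omega=\omega(G)$ be the clique number of $G$, and let $\ell=\min(n^+,\omega)$. Then \[ \mu_1^2+\mu_2^2+\cdots+\mu_\ell^2\le \frac{2m(\omega-1)}{\omega}. \]
   Context: The Johnson graph $J(p,k)$ has as vertices the $k$-element subsets of a $p$-element set, two vertices being adjacent if and only if their intersection has exactly $k-1$ elements. Eigenvalues are those of the adjacency matrix. *)

From mathcomp Require Import all_boot all_order all_algebra.
Set Implicit Arguments. Unset Strict Implicit. Unset Printing Implicit Defensive.
Import Order.TTheory GRing.Theory Num.Theory.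

Notation johnson_vertex p k := {A : {set 'I_p} | #|A| == k}.

Definition johnson_adj (p k : nat) (x y : johnson_vertex p k) : bool :=
  #|(val x) :&: (val y)| == k.-1.

Definition johnson_n (p k : nat) : nat := #|{: johnson_vertex p k}|.

Definition johnson_adjmx (R : nzRingType) (p k : nat) : 'M[R]_(johnson_n p k) :=
  \matrix_(i, j) (johnson_adj (enum_val i) (enum_val j))%:R%R.

Definition johnson_edges (p k : nat) : {set {set johnson_vertex p k}} :=
  [set E : {set johnson_vertex p k} |
     [exists x, exists y, [&& x != y, johnson_adj x y & E == [set x; y]]]].

Definition johnson_m (p k : nat) : nat := #|johnson_edges p k|.

Definition johnson_clique (p k : nat) (S : {set johnson_vertex p k}) : bool :=
  [forall x in S, forall y in S, (x != y) ==> johnson_adj x y].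

Definition johnson_omega (p k : nat) : nat :=
  \max_(S : {set johnson_vertex p k} | johnson_clique S) #|S|.

From mathcomp Require Import all_boot all_order all_algebra ring zify.
Set Implicit Arguments. Unset Strict Implicit. Unset Printing Implicit Defensive.
Import Order.TTheory GRing.Theory Num.Theory.
Local Open Scope ring_scope.

(* Write the adjacency matrix as A = W W^T - k I, where W is the inclusion matrix
   of k-sets versus (k-1)-sets: two distinct k-sets share a (k-1)-subset exactly
   when they are adjacent.  By Sylvester's determinant identity, -k is then an
   eigenvalue of multiplicity at least n - C(p, k-1).  As the squared eigenvalues
   sum to tr A^2 = 2m, the squares of the positive ones (a fortiori of the l
   largest) sum to at most 2m - k^2 (n - C(p, k-1)).  The k-sets through a fixed
   (k-1)-set form a clique, so w >= p - k + 1, and with the double count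
   n k = C(p, k-1) (p - k + 1) and p >= 2k this yields
   2m <= w k^2 (n - C(p, k-1)), which is the claimed bound. *)

Lemma horner_char_poly (R : comNzRingType) n (A : 'M[R]_n) x :
  (char_poly A).[x] = \det (x%:M - A).
Proof.
rewrite /char_poly -horner_evalE -det_map_mx; congr (\det _).
by apply/matrixP => i j; rewrite !mxE rmorphB rmorphMn /= !horner_evalE hornerX hornerC.
Qed.

(* Sylvester's determinant identity, from two block factorisations of [yI W; V I]. *)
Lemma det_scalar_subMC (R : comNzRingType) n r (W : 'M[R]_(n, r)) (V : 'M[R]_(r, n)) y :
  y ^+ r * \det (y%:M - W *m V) = y ^+ n * \det (y%:M - V *m W).
Proof.
have e1 : block_mx 1%:M 0 (-V) y%:M *m block_mx y%:M W V 1%:M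
          = block_mx y%:M W 0 (y%:M - V *m W).
  rewrite mulmx_block !mul1mx !mul0mx !addr0 !mulmx1 mul_scalar_mx mul_mx_scalar.
  by rewrite scalerN addNr mulNmx [in RHS]addrC.
have e2 : block_mx y%:M W V 1%:M *m block_mx 1%:M 0 (-V) 1%:M
          = block_mx (y%:M - W *m V) W 0 1%:M.
  by rewrite mulmx_block !mulmx1 !mulmx0 !mul1mx !add0r mulmxN addrN.
have := congr1 determinant e1; rewrite det_mulmx det_lblock det_ublock.
have := congr1 determinant e2; rewrite det_mulmx det_lblock det_ublock.
by rewrite !det1 !det_scalar !mulr1 mul1r => -> <-.
Qed.

Lemma size_char_poly_roots (R : nzRingType) n (A : 'M[R]_n) (s : seq R) :
  char_poly A = \prod_(x <- s) ('X - x%:P) -> size s = n.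
Proof.
move=> defA; have := congr1 (fun q : {poly R} => size q) defA.
by rewrite /= size_char_poly size_prod_XsubC; case.
Qed.

Lemma mxtrace_char_poly_roots (R : comNzRingType) n (A : 'M[R]_n) (s : seq R) :
  char_poly A = \prod_(x <- s) ('X - x%:P) -> \tr A = \sum_(x <- s) x.
Proof.
move=> defA; have size_s := size_char_poly_roots defA.
case: n A defA size_s => [|n] A defA size_s.
  by case: s defA size_s => // _ _; rewrite big_nil /mxtrace big_ord0.
apply: oppr_inj; rewrite -char_poly_trace // defA -{1}size_s.
by rewrite coefPn_prod_XsubC ?size_s.
Qed.

Lemma poly_horner_sqr_eq0 (R : numFieldType) (q : {poly R}) :
  (forall x : R, q.[x ^+ 2] = 0) -> q = 0.
Proof.
move=> q_sqr0; apply/eqP; apply/negPn/negP => q_neq0.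
set rs := [seq (i%:R : R) ^+ 2 | i <- iota 0 (size q)].
suff : (size rs < size q)%N by rewrite size_map size_iota ltnn.
apply: max_poly_roots => //.
  by apply/allP => y /mapP [i _ ->]; rewrite /root q_sqr0.
rewrite map_inj_in_uniq ?iota_uniq // => i j _ _.
by rewrite -!natrX => /eqP; rewrite eqr_nat eqn_exp2r // => /eqP.
Qed.

(* Evaluate at x^2, where x^2 I - A^2 = (x I - A)(x I + A). *)
Lemma char_poly_sqr (R : numFieldType) n (A : 'M[R]_n) (s : seq R) :
  char_poly A = \prod_(x <- s) ('X - x%:P) ->
  char_poly (A *m A) = \prod_(x <- [seq x ^+ 2 | x <- s]) ('X - x%:P).
Proof.
move=> defA; have size_s := size_char_poly_roots defA.
apply/eqP; rewrite -subr_eq0; apply/eqP; apply: poly_horner_sqr_eq0 => x.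
rewrite hornerD hornerN horner_char_poly horner_prod.
have -> : (x ^+ 2)%:M - A *m A = (x%:M - A) *m ((-1) *: ((- x)%:M - A)).
  rewrite scaleN1r opprB raddfN /= opprK mulmxBl !mulmxDr !mul_scalar_mx.
  rewrite mul_mx_scalar scale_scalar_mx -expr2 opprD addrA [x *: A + _]addrC.
  by rewrite addrAC addrK.
rewrite det_mulmx detZ -!horner_char_poly defA !horner_prod big_map -size_s.
apply/eqP; rewrite subr_eq0; apply/eqP.
elim: s {defA size_s} => [|m s IH]; first by rewrite !big_nil expr0 !mul1r.
by rewrite !big_cons /= !hornerXsubC exprS -IH; ring.
Qed.

Lemma mxtrace_sqr_char_poly_roots (R : numFieldType) n (A : 'M[R]_n) (s : seq R) :
  char_poly A = \prod_(x <- s) ('X - x%:P) -> \tr (A *m A) = \sum_(x <- s) x ^+ 2.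
Proof.
by move=> defA; rewrite (mxtrace_char_poly_roots (char_poly_sqr defA)) big_map.
Qed.

(* By Sylvester's identity ('X + c)^(n - r) divides char_poly (W V - c I). *)
Lemma count_root_char_poly_lowrank (R : fieldType) n r (W : 'M[R]_(n, r))
    (V : 'M[R]_(r, n)) (c : R) (s : seq R) :
  char_poly (W *m V - c%:M) = \prod_(x <- s) ('X - x%:P) ->
  (n - r <= count_mem (- c) s)%N.
Proof.
move=> defA; set y : {poly R} := 'X + c%:P.
have y_neq0 : y != 0 by rewrite /y -[c]opprK polyCN polyXsubC_eq0.
have [le_rn | lt_nr] := leqP r n; last by rewrite (eqP (ltnW lt_nr)).
have char_det : char_poly (W *m V - c%:M)
    = \det (y%:M - map_mx polyC W *m map_mx polyC V).
  rewrite /char_poly /char_poly_mx map_mxB map_mxM map_scalar_mx /=.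
  by rewrite opprB addrA -raddfD.
have := det_scalar_subMC (map_mx polyC W) (map_mx polyC V) y.
rewrite -char_det -[in y ^+ n](subnKC le_rn) exprD -mulrA => /mulfI.
rewrite expf_neq0 // => /(_ isT) char_fact.
rewrite -mu_prod_XsubC -defA mup_geq ?monic_neq0 ?char_poly_monic //.
by rewrite polyCN opprK char_fact dvdp_mulIl.
Qed.

Lemma sum_sqr_pos_count_le (R : realDomainType) (s : seq R) (c : R) : c < 0 ->
  \sum_(x <- s | 0 < x) x ^+ 2 + c ^+ 2 * (count_mem c s)%:R <= \sum_(x <- s) x ^+ 2.
Proof.
move=> c_lt0; elim: s => [|a s IH]; first by rewrite !big_nil mulr0 addr0.
rewrite !big_cons /=; have [a_gt0 | a_le0] := ltP 0 a.
  by rewrite gt_eqF ?(lt_trans c_lt0 a_gt0) // add0n -addrA lerD2l.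
have [-> | a_neq_c] := eqVneq a c.
  by rewrite natrD mulrDr mulr1 addrCA lerD2l.
by rewrite add0n; apply: le_trans IH _; rewrite lerDr sqr_ge0.
Qed.

Lemma sum_sqr_prefix_le_pos (R : realDomainType) (s : seq R) (l : nat) :
  sorted >=%R s -> (l <= count (fun x => (0 < x)%R) s)%N ->
  \sum_(i < l) s`_i ^+ 2 <= \sum_(x <- s | 0 < x) x ^+ 2.
Proof.
elim: s l => [|a s IH] l.
  by move=> _; rewrite leqn0 => /eqP ->; rewrite big_nil big_ord0.
move=> s_sorted; case: l => [|l] l_le.
  by rewrite big_ord0 sumr_ge0 // => x _; rewrite sqr_ge0.
have a_gt0 : 0 < a.
  rewrite ltNge; apply/negP => a_le0; move: l_le; rewrite /= ltNge a_le0 add0n.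
  suff -> : count (fun x => (0 < x)%R) s = 0%N by [].
  apply/eqP; rewrite -leqn0 leqNgt -has_count; apply/hasPn => x xs.
  have s_le_a := order_path_min (fun _ _ _ h1 h2 => le_trans h2 h1) s_sorted.
  by rewrite -leNgt (le_trans _ a_le0) // (allP s_le_a).
rewrite big_ord_recl big_cons a_gt0 lerD // IH ?(path_sorted s_sorted) //.
by move: l_le; rewrite /= a_gt0.
Qed.

Lemma sum_sqr_top_roots_lowrank_le (R : realFieldType) n r (A : 'M[R]_n)
    (W : 'M[R]_(n, r)) (V : 'M[R]_(r, n)) (c : R) (s : seq R) (l : nat) :
  0 < c -> A = W *m V - c%:M -> char_poly A = \prod_(x <- s) ('X - x%:P) ->
  sorted >=%R s -> (l <= count (fun x => (0 < x)%R) s)%N ->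
  \sum_(i < l) s`_i ^+ 2 <= \tr (A *m A) - c ^+ 2 * (n - r)%:R.
Proof.
move=> c_gt0 defA charA s_sorted l_le.
rewrite (mxtrace_sqr_char_poly_roots charA) lerBrDr.
apply: le_trans (sum_sqr_pos_count_le s (_ : - c < 0)); last by rewrite oppr_lt0.
rewrite lerD ?sum_sqr_prefix_le_pos // sqrrN ler_wpM2l ?sqr_ge0 // ler_nat.
by move: charA; rewrite defA; apply: count_root_char_poly_lowrank.
Qed.

Lemma sum_nat_of_bool (T : finType) (P : pred T) :
  (\sum_i (P i : nat))%N = #|[set i | P i]|.
Proof.
by rewrite -sum1_card [RHS]big_mkcond; apply: eq_bigr => i _; rewrite inE; case: (P i).
Qed.

Section SymmetricRelation.

Variables (T : finType) (e : rel T).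

Definition rel_edges : {set {set T}} :=
  [set E | [exists x, exists y, [&& x != y, e x y & E == [set x; y]]]].

Definition rel_adjmx (R : nzRingType) : 'M[R]_#|T| :=
  \matrix_(i, j) (e (enum_val i) (enum_val j))%:R.

Hypothesis e_sym : symmetric e.

Lemma mxtrace_rel_adjmx_sqr (R : nzRingType) :
  \tr (rel_adjmx R *m rel_adjmx R) = (\sum_x \sum_y e x y)%N%:R.
Proof.
rewrite /mxtrace natr_sum (big_enum_val (fun x => (\sum_y e x y)%N%:R)) /=.
apply: eq_bigr => i _; rewrite mxE natr_sum (big_enum_val (fun y => (e _ y)%:R)) /=.
by apply: eq_bigr => j _; rewrite !mxE -natrM [e (enum_val j) _]e_sym mulnb andbb.
Qed.

Hypothesis e_irr : irreflexive e.

Lemma handshake : (\sum_x \sum_y e x y = 2 * #|rel_edges|)%N.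
Proof.
rewrite pair_big /= sum_nat_of_bool -sum1_card.
rewrite (partition_big (fun u => [set u.1; u.2]) (mem rel_edges)) /=; last first.
  move=> [x y]; rewrite !inE /= => exy; apply/existsP; exists x; apply/existsP; exists y.
  rewrite exy eqxx !andbT; apply: contraTneq exy => ->; by rewrite e_irr.
rewrite mulnC -sum_nat_const; apply: eq_bigr => E.
rewrite inE => /existsP [x /existsP [y /and3P [x_neq_y exy /eqP ->]]].
rewrite sum1_card (@eq_card _ _ (pred2 (x, y) (y, x))).
  by rewrite card2 xpair_eqE negb_and x_neq_y.
move=> [a b]; rewrite !inE /=; apply/andP/orP => [[+ /eqP Eab] | ].
  rewrite inE /= => eab.
  have a_neq_b : a != b by apply: contraTneq eab => ->; rewrite e_irr.
  have /set2P a_xy : a \in [set x; y] by rewrite -Eab set21.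
  have /set2P b_xy : b \in [set x; y] by rewrite -Eab set22.
  by case: a_xy b_xy a_neq_b => -> [] ->; rewrite ?eqxx // => _; [left | right].
case=> /eqP [-> ->]; rewrite inE /=; first by rewrite exy eqxx.
by rewrite e_sym exy setUC eqxx.
Qed.

End SymmetricRelation.

Notation ksubset p j := {B : {set 'I_p} | #|B| == j}.

Lemma card_ksubsets_sub p j (S : {set 'I_p}) :
  #|[set c : ksubset p j | val c \subset S]| = 'C(#|S|, j).
Proof.
rewrite -cards_draws -(card_imset _ val_inj); apply: eq_card => B; rewrite !inE.
apply/imsetP/andP => [[c] | [BS Bj]]; first by rewrite inE => cS ->; rewrite cS (valP c).
by exists (exist _ B Bj); rewrite ?inE.
Qed.

Lemma card_ksubset p j : #|{: ksubset p j}| = 'C(p, j).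
Proof.
have := card_ksubsets_sub j [set: 'I_p]; rewrite cardsT card_ord => <-.
by apply: eq_card => c; rewrite !inE subsetT.
Qed.

(* Complementation maps the k-supersets of S onto the (p - k)-subsets of ~: S. *)
Lemma card_ksupersets p j k (S : {set 'I_p}) : #|S| = j -> (k <= p)%N ->
  #|[set v : ksubset p k | S \subset val v]| = 'C(p - j, p - k).
Proof.
move=> card_S k_le_p; rewrite -(card_imset _ val_inj).
have -> : [set val v | v in [set v : ksubset p k | S \subset val v]]
    = @setC _ @: [set D : {set 'I_p} | D \subset ~: S & #|D| == (p - k)%N].
  apply/setP => B; apply/imsetP/imsetP => [[v] | [D]].
    rewrite inE => Sv ->; exists (~: val v); last by rewrite setCK.
    rewrite inE setCS Sv; apply/eqP.
    by have := cardsC (val v); rewrite (eqP (valP v)) card_ord; lia.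
  rewrite inE => /andP [D_sub /eqP card_D] ->.
  have card_CD : #|~: D| == k.
    by apply/eqP; have := cardsC D; rewrite card_D card_ord; lia.
  by exists (exist _ (~: D) card_CD); rewrite // inE /= -setCS setCK.
rewrite card_imset ?cards_draws; last exact: setC_inj.
suff -> : #|~: S| = (p - j)%N by [].
by have := cardsC S; rewrite card_S card_ord; lia.
Qed.

Lemma sum_bin_card_setI p j k (S : {set 'I_p}) : (k <= p)%N ->
  (\sum_(v : ksubset p k) 'C(#|S :&: val v|, j))%N = ('C(#|S|, j) * 'C(p - j, p - k))%N.
Proof.
move=> k_le_p; transitivity (\sum_(v : ksubset p k) \sum_(c : ksubset p j)
    ((val c \subset S) && (val c \subset val v) : nat))%N.
  apply: eq_bigr => v _; rewrite -card_ksubsets_sub sum_nat_of_bool.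
  by apply: eq_card => c; rewrite !inE subsetI.
rewrite exchange_big /= -card_ksubsets_sub -sum_nat_of_bool big_distrl /=.
apply: eq_bigr => c _; case: (val c \subset S); last by rewrite big1.
by rewrite mul1n sum_nat_of_bool (card_ksupersets (eqP (valP c))).
Qed.

Section Johnson.

Variables p k : nat.

Lemma johnson_adj_sym : symmetric (@johnson_adj p k).
Proof. by move=> v w; rewrite /johnson_adj setIC. Qed.

Definition johnson_inclmx (R : nzRingType) :
    'M[R]_(johnson_n p k, #|{: ksubset p k.-1}|) :=
  \matrix_(i, j) (val (enum_val j : ksubset p k.-1)
                   \subset val (enum_val i : johnson_vertex p k) : nat)%:R.

Hypothesis k_gt0 : (0 < k)%N.

Let bin_k_pred : 'C(k, k.-1) = k.
Proof. by rewrite -subn1 bin_sub // bin1. Qed.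

Lemma johnson_adj_irr : irreflexive (@johnson_adj p k).
Proof.
by move=> v; rewrite /johnson_adj setIid (eqP (valP v)) eq_sym ltn_eqF // ltn_predL.
Qed.

Lemma bin_card_setI_johnson (v w : johnson_vertex p k) :
  'C(#|val v :&: val w|, k.-1) = (johnson_adj v w + k * (v == w))%N.
Proof.
have card_v := eqP (valP v); have card_w := eqP (valP w).
have [<- | v_neq_w] := eqVneq v w.
  by rewrite johnson_adj_irr setIid card_v muln1 bin_k_pred.
have card_vw_lt : (#|val v :&: val w| < k)%N.
  have := subset_leq_card (subsetIl (val v) (val w)); rewrite card_v ltn_neqAle => ->.
  rewrite andbT; apply: contra v_neq_w => /eqP card_vw; apply/eqP/val_inj/eqP.
  rewrite eqEcard card_v card_w leqnn andbT; apply/setIidPl/eqP.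
  by rewrite eqEcard subsetIl card_vw card_v leqnn.
rewrite /johnson_adj muln0 addn0.
case: eqP => [-> | ne_k1]; first by rewrite binn.
by rewrite bin_small //; lia.
Qed.

Lemma johnson_clique_supersets (c : ksubset p k.-1) :
  johnson_clique [set v : johnson_vertex p k | val c \subset val v].
Proof.
apply/forall_inP => x; rewrite inE => c_sub_x; apply/forall_inP => y.
rewrite inE => c_sub_y; apply/implyP => x_neq_y.
have : (0 < 'C(#|val x :&: val y|, k.-1))%N.
  by rewrite bin_gt0 -(eqP (valP c)) subset_leq_card // subsetI c_sub_x.
by rewrite bin_card_setI_johnson (negbTE x_neq_y) muln0 addn0 lt0b.
Qed.

Lemma johnson_adjmx_inclmx (R : comNzRingType) :
  johnson_adjmx R p k = johnson_inclmx R *m (johnson_inclmx R)^T - k%:R%:M.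
Proof.
apply/matrixP => i j; rewrite !mxE.
under eq_bigr do rewrite !mxE -natrM mulnb.
rewrite -natr_sum -(big_enum_val (fun c : ksubset p k.-1 =>
   ((val c \subset val (enum_val i)) && (val c \subset val (enum_val j)) : nat))) /=.
rewrite (eq_bigl xpredT) // sum_nat_of_bool.
rewrite (eq_card (B := [set c : ksubset p k.-1 |
                          val c \subset val (enum_val i) :&: val (enum_val j)]));
  last by move=> c; rewrite !inE subsetI.
rewrite card_ksubsets_sub bin_card_setI_johnson (inj_eq enum_val_inj).
by case: (i == j); rewrite ?muln1 ?muln0 ?addn0 ?natrD ?addrK ?subr0.
Qed.

Hypothesis k_le_p : (k <= p)%N.

Let p_sub_k_pred : (p - k.-1 = (p - k).+1)%N.
Proof. lia. Qed.

Lemma johnson_deg (v : johnson_vertex p k) :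
  (\sum_w johnson_adj v w)%N = (k * (p - k))%N.
Proof.
have sum_diag : (\sum_w k * (v == w))%N = k.
  rewrite (bigD1 v) //= eqxx muln1 big1 ?addn0 // => w.
  by rewrite eq_sym => /negbTE ->; rewrite muln0.
have := sum_bin_card_setI k.-1 (val v) k_le_p.
rewrite (eq_bigr _ (fun w _ => bin_card_setI_johnson v w)) big_split /= sum_diag.
rewrite (eqP (valP v)) bin_k_pred p_sub_k_pred binSn mulnS addnC.
by move=> /eqP; rewrite eqn_add2l => /eqP.
Qed.

Lemma johnson_n_mul : (johnson_n p k * k = 'C(p, k.-1) * (p - k).+1)%N.
Proof.
have := sum_bin_card_setI k.-1 [set: 'I_p] k_le_p.
rewrite cardsT card_ord (eq_bigr (fun _ => k)) => [|v _]; last first.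
  by rewrite setTI (eqP (valP v)) bin_k_pred.
by rewrite sum_nat_const p_sub_k_pred binSn.
Qed.

Lemma johnson_omega_ge : ((p - k).+1 <= johnson_omega p k)%N.
Proof.
have : (0 < #|{: ksubset p k.-1}|)%N by rewrite card_ksubset bin_gt0; lia.
case/card_gt0P => c _; rewrite -[X in (X <= _)%N]binSn -p_sub_k_pred.
rewrite -(card_ksupersets (eqP (valP c)) k_le_p).
exact: (leq_bigmax_cond _ (johnson_clique_supersets c)).
Qed.

End Johnson.

(* 2m = n k (p - k), while n k = C(p, k-1) (p - k + 1) and p >= 2k give
   n k (p - k) <= (p - k + 1) k^2 (n - C(p, k-1)). *)
Lemma johnson_edges_le p k : (2 <= k)%N -> (2 * k <= p)%N ->
  (2 * johnson_m p k <= johnson_omega p k * (k ^ 2 * (johnson_n p k - 'C(p, k.-1))))%N.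
Proof.
move=> k_ge2 p_ge2k; have k_gt0 : (0 < k)%N by lia.
have k_le_p : (k <= p)%N by lia.
have := handshake (@johnson_adj_sym p k) (johnson_adj_irr k_gt0).
rewrite /johnson_m => <-; rewrite (eq_bigr _ (fun v _ => johnson_deg k_gt0 k_le_p v)).
rewrite sum_nat_const -/(johnson_n p k).
have n_mul := johnson_n_mul k_gt0 k_le_p.
move: (johnson_n p k) (johnson_omega p k) (johnson_omega_ge k_gt0 k_le_p) n_mul.
move=> n w w_ge n_mul; set r := 'C(p, k.-1) in n_mul *.
apply: leq_trans (leq_mul w_ge (leqnn _)).
have sub_mul : ((n - r) * (p - k).+1 = n * (p - 2 * k).+1)%N.
  by rewrite mulnBl -n_mul -mulnBr; congr (n * _); lia.
have -> : ((p - k).+1 * (k ^ 2 * (n - r)) = k * k * (n * (p - 2 * k).+1))%N.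
  by rewrite -sub_mul; move: (n - r)%N => a; ring.
have : (p - k <= k * (p - 2 * k).+1)%N by nia.
nia.
Qed.

Lemma ler_subr_mul_pred_div (R : realFieldType) (a b : R) (w : nat) : (0 < w)%N ->
  a <= w%:R * b -> a - b <= a * (w.-1)%:R / w%:R.
Proof.
move=> w_gt0 a_le; rewrite ler_pdivlMr ?ltr0n // -subn1 natrB // mulrBr mulr1.
by rewrite mulrBl lerD2l lerN2 mulrC.
Qed.

Theorem mainTheorem3 (R : rcfType) (p k : nat) (mu : seq R) :
  (2 <= k)%N -> (2 * k <= p)%N ->
  char_poly (johnson_adjmx R p k) = \prod_(x <- mu) ('X - x%:P) ->
  sorted >=%R mu ->
  let npos := count (fun x => 0 < x) mu in
  let w := johnson_omega p k in
  let l := minn npos w in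
  \sum_(i < l) (mu`_i) ^+ 2 <=
    2 * (johnson_m p k)%:R * (w.-1)%:R / w%:R.
Proof.
move=> k_ge2 p_ge2k char_mu mu_sorted; cbv zeta.
set w := johnson_omega p k.
have k_gt0 : (0 < k)%N by lia.
have k_le_p : (k <= p)%N by lia.
have w_gt0 : (0 < w)%N := leq_trans (ltn0Sn _) (johnson_omega_ge k_gt0 k_le_p).
have k_gt0R : 0 < k%:R :> R by rewrite ltr0n.
have := sum_sqr_top_roots_lowrank_le k_gt0R (johnson_adjmx_inclmx p k_gt0 R)
  char_mu mu_sorted (geq_minl _ w).
rewrite (mxtrace_rel_adjmx_sqr (@johnson_adj_sym p k)).
rewrite (handshake (@johnson_adj_sym p k) (johnson_adj_irr k_gt0)) card_ksubset.
move/le_trans; apply; rewrite -natrM; apply: ler_subr_mul_pred_div => //.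
by rewrite -natrX -!natrM ler_nat johnson_edges_le.
Qed.
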